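(* Let $n \ge 3$ be an integer, let $\alpha$ be a primitive element of $\mathbb{F}_{2^n}$ (identified with $\mathbb{F}_2^n$), and let $X = \{0, \alpha^{i_1}, \ldots, \alpha^{i_7}\}$ be a $3$-dimensional $\mathbb{F}_2$-subspace with $|\Delta(X)| = 42$. Then the cyclic shifts $\Phi_j(X)$, $0 \le j \le 2^n-2$, are $2^n-1$ pairwise distinct $3$-dimensional subspaces, and the $7\cdot(2^n-1)$ two-dimensional subspaces contained in these $2^n-1$ subspaces (seven in each) are pairwise distinct.
   Context: The cyclic shift mapping is $\Phi_j(\alpha^i) = \alpha^{i+j}$ (exponents modulo $2^n-1$), $\Phi_j(0)=0$, applied to sets elementwise. For a $3$-dimensional subspace $X = \{0,\alpha^{i_1},\ldots,\alpha^{i_7}\}$ with $i_1,\ldots,i_7 \in \{0,\ldots,2^n-2\}$ distinct, its difference set is $\Delta(X) = \{ i_r - i_s \bmod (2^n-1) : 1 \le r,s \le 7,\ r \ne s\}$. *)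

From mathcomp Require Import all_boot all_order all_algebra all_field.
Set Implicit Arguments. Unset Strict Implicit. Unset Printing Implicit Defensive.
Import GRing.Theory.
Local Open Scope ring_scope.

Section Defs.
Variable F : finFieldType.

Definition Nmul : nat := (#|F|.-1)%N.

(* An F_2-subspace of F (viewed as F_2^n) of dimension k: a subset containing 0,
   closed under addition (in characteristic 2 this is F_2-linear closure),
   with 2^k elements. *)
Definition is_subspace2 (X : {set F}) (k : nat) : bool :=
  [&& 0 \in X, [forall x in X, forall y in X, (x + y) \in X] & #|X| == (2 ^ k)%N].

Definition dlog (a x : F) : nat :=
  if [pick i : 'I_Nmul | a ^+ i == x] is Some i then val i else 0%N.

Definition Phi (a : F) (j : nat) (x : F) : F :=
  if x == 0 then 0 else a ^+ ((dlog a x + j) %% Nmul).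

Definition Phi_set (a : F) (j : nat) (X : {set F}) : {set F} :=
  [set Phi a j x | x in X].

Definition Delta (a : F) (X : {set F}) : seq nat :=
  undup [seq ((dlog a p.1 + Nmul - dlog a p.2) %% Nmul)%N
        | p <- [seq (x, y) | x <- enum (X :\ 0), y <- enum (X :\ 0)] & p.1 != p.2].

Definition subspaces2_of (Y : {set F}) : {set {set F}} :=
  [set Z : {set F} | (Z \subset Y) && is_subspace2 Z 2].
End Defs.

From mathcomp Require Import all_boot all_order all_algebra all_field.
From mathcomp Require Import zify.
Set Implicit Arguments. Unset Strict Implicit. Unset Printing Implicit Defensive.
Import GRing.Theory.
Local Open Scope ring_scope.

(* Multiplication by a^j is F_2-linear, so every shift of X is again a
   3-dimensional subspace, and X has 7 planes since ordered pairs of distinct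
   nonzero vectors (42 of them) map six-to-one onto the planes they span.
   |Delta(X)| = 42 says that the 42 ordered pairs (x, y) of distinct nonzero
   elements of X have pairwise distinct ratios x / y.  If two shifts X a^j and
   X a^k share a plane, they share two distinct nonzero u, v; writing
   u = x1 a^j = y1 a^k and v = x2 a^j = y2 a^k gives x1 / x2 = u / v = y1 / y2,
   hence x1 = y1 and a^j = a^k.  Distinctness of the shifts follows, since each
   has a plane. *)

Section DistinctPairs.
Variable T : finType.

Definition distinct_pairs (A : {set T}) : {set T * T} :=
  [set p | [&& p.1 \in A, p.2 \in A & p.1 != p.2]].

Lemma card_distinct_pairs (A : {set T}) : #|distinct_pairs A| = (#|A| * #|A|.-1)%N.
Proof.
have -> : distinct_pairs A = setX A A :\: [set (x, x) | x in A].
  apply/setP => -[x y]; rewrite !inE /=.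
  have [->|nxy] := eqVneq x y.
    by case: (boolP (y \in A)) => yA; rewrite /= ?andbF // imset_f.
  rewrite andbT; case: imsetP => // -[z _ [xz yz]].
  by rewrite xz yz eqxx in nxy.
rewrite cardsD (setIidPr _); last by apply/subsetP => _ /imsetP[x xA ->]; rewrite inE xA.
by rewrite cardsX card_imset => [|x y []//]; rewrite -subn1 mulnBr muln1.
Qed.

End DistinctPairs.

Section Subspaces.
Variable F : finFieldType.
Implicit Types (X Y Z : {set F}) (k : nat).

Lemma subspace2_addr Z k x y : is_subspace2 Z k -> x \in Z -> y \in Z -> x + y \in Z.
Proof. by case/and3P => _ /forall_inP cl _ xZ /(forall_inP (cl x xZ)). Qed.

Lemma card_subspace2D0 Z k : is_subspace2 Z k -> #|Z :\ 0| = (2 ^ k).-1.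
Proof. by case/and3P => Z0 _ /eqP <-; rewrite (cardsD1 0 Z) Z0. Qed.

Lemma subspace2_scale X (c : F) k : c != 0 -> is_subspace2 X k ->
  is_subspace2 [set x * c | x in X] k.
Proof.
move=> c0 sX; have /and3P [X0 _ /eqP cX] := sX.
apply/and3P; split; first by apply/imsetP; exists 0; rewrite ?mul0r.
- apply/forall_inP => _ /imsetP[x xX ->]; apply/forall_inP => _ /imsetP[y yX ->].
  by rewrite -mulrDl; apply/imsetP; exists (x + y); rewrite ?(subspace2_addr sX).
- by rewrite card_imset ?cX //; apply: mulIf.
Qed.

Hypothesis charF2 : 2 \in [pchar F].

Definition plane (u v : F) : {set F} := [set 0; u; v; u + v].

Lemma plane_addr u v x y : x \in plane u v -> y \in plane u v -> x + y \in plane u v.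
Proof.
have c2 := addrr_pchar2 charF2.
rewrite !inE -!orbA => /or4P[]/eqP-> /or4P[]/eqP->; rewrite ?add0r ?addr0 ?c2 ?eqxx ?orbT //.
all: first [ by rewrite addrC eqxx ?orbT
           | by rewrite addrA c2 add0r eqxx ?orbT
           | by rewrite addrCA c2 addr0 eqxx ?orbT
           | by rewrite addrAC c2 add0r eqxx ?orbT
           | by rewrite -addrA c2 addr0 eqxx ?orbT ].
Qed.

Lemma card_plane u v : u != 0 -> v != 0 -> u != v -> #|plane u v| = 4%N.
Proof.
move=> u0 v0 uv.
have uv0 : u + v != 0 by rewrite addr_eq0 (oppr_pchar2 charF2).
have uuv : u != u + v by rewrite -subr_eq0 opprD addrA subrr add0r oppr_eq0.
have vuv : v != u + v by rewrite -subr_eq0 opprD addrCA subrr addr0 oppr_eq0.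
have -> : plane u v = [set x in [:: 0; u; v; u + v]].
  by apply/setP => x; rewrite !inE -!orbA.
rewrite cardsE; apply/card_uniqP; rewrite /= !inE !negb_or.
by rewrite ![0 == _]eq_sym u0 v0 uv0 uv uuv vuv.
Qed.

Lemma plane_subspace2 u v : u != 0 -> v != 0 -> u != v -> is_subspace2 (plane u v) 2.
Proof.
move=> u0 v0 uv; apply/and3P; split; first by rewrite !inE eqxx.
- by apply/forall_inP => x xP; apply/forall_inP => y yP; apply: plane_addr.
- by rewrite card_plane.
Qed.

Lemma plane_sub Y k u v : is_subspace2 Y k -> u \in Y -> v \in Y -> plane u v \subset Y.
Proof.
move=> sY uY vY; have /and3P [Y0 _ _] := sY.
apply/subsetP => x; rewrite !inE -!orbA => /or4P[]/eqP-> //.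
exact: subspace2_addr sY uY vY.
Qed.

Lemma subspace2_plane Z u v : is_subspace2 Z 2 -> u \in Z :\ 0 -> v \in Z :\ 0 -> u != v ->
  Z = plane u v.
Proof.
move=> sZ /setD1P[u0 uZ] /setD1P[v0 vZ] uv; apply/esym/eqP.
have /and3P [_ _ /eqP cZ] := sZ.
by rewrite eqEcard (plane_sub sZ) // card_plane // cZ.
Qed.

Lemma plane_fibre Y Z : Z \in subspaces2_of Y ->
  [set p in distinct_pairs (Y :\ 0) | plane p.1 p.2 == Z] = distinct_pairs (Z :\ 0).
Proof.
move=> /setIdP[ZY sZ]; apply/setP => -[u v]; rewrite !inE /=.
apply/idP/idP => [/andP[/and3P[/andP[u0 _] /andP[v0 _] uv] /eqP<-] |].
  by rewrite /plane !inE !eqxx !orbT u0 v0 uv.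
move=> /and3P[/andP[u0 uZ] /andP[v0 vZ] uv].
have uZ0 : u \in Z :\ 0 by rewrite !inE u0.
have vZ0 : v \in Z :\ 0 by rewrite !inE v0.
rewrite u0 v0 uv (subsetP ZY _ uZ) (subsetP ZY _ vZ) /=.
by rewrite -(subspace2_plane sZ uZ0 vZ0 uv).
Qed.

Lemma card_subspaces2_of Y k : is_subspace2 Y k ->
  (#|subspaces2_of Y| * 6 = (2 ^ k).-1 * ((2 ^ k).-1).-1)%N.
Proof.
move=> sY; rewrite -(card_subspace2D0 sY) -card_distinct_pairs.
have planeP p : p \in distinct_pairs (Y :\ 0) -> plane p.1 p.2 \in subspaces2_of Y.
  case: p => u v; rewrite inE => /and3P[/setD1P[u0 uY] /setD1P[v0 vY] uv].
  by rewrite inE (plane_sub sY) // plane_subspace2.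
rewrite -[in RHS]sum1_card.
rewrite (partition_big (fun p => plane p.1 p.2) (mem (subspaces2_of Y))) //=.
rewrite -sum_nat_const; apply: eq_bigr => Z ZY.
by rewrite sum1dep_card plane_fibre // card_distinct_pairs (card_subspace2D0 (setIdP ZY).2).
Qed.

End Subspaces.

Lemma expf_Nmul (F : finFieldType) (x : F) : x != 0 -> x ^+ Nmul F = 1.
Proof.
move=> x0; apply: (mulfI x0); rewrite mulr1 -exprS prednK ?expf_card //.
exact: ltnW (finNzRing_gt1 F).
Qed.

Section PrimitiveShift.
Variables (F : finFieldType) (a : F).
Hypothesis prim : (Nmul F).-primitive_root a.
Implicit Types (X : {set F}) (x y : F).

Lemma dlog_lt x : (dlog a x < Nmul F)%N.
Proof.
by rewrite /dlog; case: pickP => [i _ | _]; [exact: ltn_ord | exact: prim_order_gt0 prim].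
Qed.

Lemma dlogK x : x != 0 -> a ^+ dlog a x = x.
Proof.
move=> x0; rewrite /dlog; case: pickP => [i /eqP // | noi].
have [i xai] := prim_rootP prim (expf_Nmul x0).
by have := noi i; rewrite xai eqxx.
Qed.

Lemma expr_prim_neq0 j : a ^+ j != 0.
Proof. by rewrite expf_neq0 // (prim_root_eq0 prim) -lt0n (prim_order_gt0 prim). Qed.

Lemma PhiE j x : Phi a j x = x * a ^+ j.
Proof.
rewrite /Phi; have [->|x0] := eqVneq x 0; first by rewrite mul0r.
by rewrite prim_expr_mod // exprD dlogK.
Qed.

Lemma Phi_setE j X : Phi_set a j X = [set x * a ^+ j | x in X].
Proof. by apply: eq_imset => x; rewrite PhiE. Qed.

Definition dlog_diff (p : F * F) : nat :=
  ((dlog a p.1 + Nmul F - dlog a p.2) %% Nmul F)%N.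

Lemma Delta_image X : Delta a X =i [seq dlog_diff p | p in distinct_pairs (X :\ 0)].
Proof.
set A := X :\ 0.
have pairsE : [seq p <- [seq (x, y) | x <- enum A, y <- enum A] | p.1 != p.2] =i
              distinct_pairs A.
  move=> [x y]; rewrite mem_filter [in RHS]inE /=.
  have -> : ((x, y) \in [seq (x, y) | x <- enum A, y <- enum A]) = (x \in A) && (y \in A).
    apply/allpairsP/andP => [[[x' y'] [/= xA yA [-> ->]]] | [xA yA]].
      by move: xA yA; rewrite !mem_enum => -> ->.
    by exists (x, y); rewrite !mem_enum.
  by rewrite andbC -andbA.
move=> d; rewrite mem_undup.
by apply/mapP/imageP => -[p pP ->]; exists p; rewrite // (pairsE p) in pP *.
Qed.

Lemma full_Delta_injective X :
  size (Delta a X) = #|distinct_pairs (X :\ 0)| ->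
  {in distinct_pairs (X :\ 0) &, injective dlog_diff}.
Proof.
move=> fullD; apply/dinjectiveP.
by rewrite /dinjectiveb (uniq_size_uniq (undup_uniq _) (Delta_image X)) size_map -cardE fullD.
Qed.

Lemma dlog_diff_ratio x1 x2 y1 y2 : x1 != 0 -> x2 != 0 -> y1 != 0 -> y2 != 0 ->
  x1 * y2 = y1 * x2 -> dlog_diff (x1, x2) = dlog_diff (y1, y2).
Proof.
move=> x10 x20 y10 y20 eq_ratio.
have /eqP : (dlog a x1 + dlog a y2 == dlog a y1 + dlog a x2 %[mod Nmul F])%N.
  by rewrite -(eq_prim_root_expr prim) !exprD !dlogK // eq_ratio.
rewrite /dlog_diff /= => eq_mod.
have lt_x2 := dlog_lt x2; have lt_y2 := dlog_lt y2.
apply/eqP; rewrite -(eqn_modDr (dlog a x2 + dlog a y2)).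
have -> : (dlog a x1 + Nmul F - dlog a x2 + (dlog a x2 + dlog a y2) =
           dlog a x1 + dlog a y2 + Nmul F)%N by lia.
have -> : (dlog a y1 + Nmul F - dlog a y2 + (dlog a x2 + dlog a y2) =
           dlog a y1 + dlog a x2 + Nmul F)%N by lia.
by rewrite !modnDr eq_mod.
Qed.

Lemma full_Delta_ratio_injective X x1 x2 y1 y2 :
  size (Delta a X) = #|distinct_pairs (X :\ 0)| ->
  (x1, x2) \in distinct_pairs (X :\ 0) -> (y1, y2) \in distinct_pairs (X :\ 0) ->
  x1 * y2 = y1 * x2 -> x1 = y1.
Proof.
move=> fullD xP yP eq_ratio.
move: (xP) (yP); rewrite !inE /= => /and3P[/andP[x10 _] /andP[x20 _] _].
move=> /and3P[/andP[y10 _] /andP[y20 _] _].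
by have [] := full_Delta_injective fullD xP yP (dlog_diff_ratio x10 x20 y10 y20 eq_ratio).
Qed.

Lemma Phi_set_share_pair X j k u v :
  size (Delta a X) = #|distinct_pairs (X :\ 0)| ->
  (j < Nmul F)%N -> (k < Nmul F)%N -> u != 0 -> v != 0 -> u != v ->
  u \in Phi_set a j X -> v \in Phi_set a j X ->
  u \in Phi_set a k X -> v \in Phi_set a k X -> j = k.
Proof.
move=> fullD jN kN u0 v0 uv; rewrite !Phi_setE.
move=> /imsetP[x1 x1X ux] /imsetP[x2 x2X vx] /imsetP[y1 y1X uy] /imsetP[y2 y2X vy].
have [x10 _] : x1 != 0 /\ a ^+ j != 0 by apply/norP; rewrite -mulf_eq0 -ux.
have [x20 _] : x2 != 0 /\ a ^+ j != 0 by apply/norP; rewrite -mulf_eq0 -vx.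
have [y10 _] : y1 != 0 /\ a ^+ k != 0 by apply/norP; rewrite -mulf_eq0 -uy.
have [y20 _] : y2 != 0 /\ a ^+ k != 0 by apply/norP; rewrite -mulf_eq0 -vy.
have xP : (x1, x2) \in distinct_pairs (X :\ 0).
  by rewrite !inE x10 x20 x1X x2X /=; apply: contraNneq uv => e; rewrite ux vx e.
have yP : (y1, y2) \in distinct_pairs (X :\ 0).
  by rewrite !inE y10 y20 y1X y2X /=; apply: contraNneq uv => e; rewrite uy vy e.
have eq_ratio : x1 * y2 = y1 * x2.
  apply: (mulIf (mulf_neq0 (expr_prim_neq0 j) (expr_prim_neq0 k))).
  by rewrite mulrACA -ux -vy [a ^+ j * _]mulrC mulrACA -uy -vx mulrC.
have x1y1 := full_Delta_ratio_injective fullD xP yP eq_ratio.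
have /eqP : a ^+ j = a ^+ k by apply: (mulfI x10); rewrite -ux x1y1 -uy.
by rewrite (eq_prim_root_expr prim) !modn_small // => /eqP.
Qed.

End PrimitiveShift.

Theorem lemma8 (F : finFieldType) (n : nat) (a : F) (X : {set F}) :
  (3 <= n)%N -> #|F| = (2 ^ n)%N ->
  (Nmul F).-primitive_root a ->
  is_subspace2 X 3 -> size (Delta a X) = 42%N ->
  [/\ (forall j, (j < Nmul F)%N -> is_subspace2 (Phi_set a j X) 3),
      (forall j k, (j < Nmul F)%N -> (k < Nmul F)%N ->
         Phi_set a j X = Phi_set a k X -> j = k),
      (forall j, (j < Nmul F)%N -> #|subspaces2_of (Phi_set a j X)| = 7%N) &
      (forall j k (Z : {set F}), (j < Nmul F)%N -> (k < Nmul F)%N ->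
         Z \in subspaces2_of (Phi_set a j X) ->
         Z \in subspaces2_of (Phi_set a k X) -> j = k)].
Proof.
move=> _ cardF prim sX sizeD.
have charF2 : 2 \in [pchar F] by apply: (card_finPcharP cardF).
have fullD : size (Delta a X) = #|distinct_pairs (X :\ 0)|.
  by rewrite sizeD card_distinct_pairs (card_subspace2D0 sX).
have sPhi j : is_subspace2 (Phi_set a j X) 3.
  by rewrite (Phi_setE prim) subspace2_scale // (expr_prim_neq0 prim).
have card7 j : #|subspaces2_of (Phi_set a j X)| = 7%N.
  apply/eqP; rewrite -(eqn_pmul2r (isT : 0 < 6)%N).
  by rewrite (card_subspaces2_of charF2 (sPhi j)).
have planes_disjoint j k Z : (j < Nmul F)%N -> (k < Nmul F)%N ->
    Z \in subspaces2_of (Phi_set a j X) -> Z \in subspaces2_of (Phi_set a k X) -> j = k.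
  move=> jN kN /setIdP[Zj sZ] /setIdP[Zk _].
  have [u [v [/setD1P[u0 uZ] /setD1P[v0 vZ] uv]]] :
      exists u v, [/\ u \in Z :\ 0, v \in Z :\ 0 & u != v].
    by apply/card_gt1P; rewrite (card_subspace2D0 sZ).
  exact: (Phi_set_share_pair prim fullD jN kN u0 v0 uv
           (subsetP Zj u uZ) (subsetP Zj v vZ) (subsetP Zk u uZ) (subsetP Zk v vZ)).
split=> // j k jN kN eq_jk.
have [Z ZinJ] : exists Z, Z \in subspaces2_of (Phi_set a j X).
  by apply/card_gt0P; rewrite card7.
by apply: (planes_disjoint j k Z jN kN ZinJ); rewrite -eq_jk.
Qed.
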